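(* If the communication graph of a system is a simple chain (a path graph) of $n\ge2$ trajectories, then its isolation-resilience is $n-2$.
   Context: Model. A system consists of pairwise disjoint unit circles $C_1,\dots,C_n$ in the plane (trajectories) and a communication range $r>0$. Its communication graph $G$ has vertex set $\{C_1,\dots,C_n\}$, $C_i,C_j$ adjacent iff the distance between their centres is at most $2+r$ (the circles need not lie on a straight line). Positions on a circle are angles (mod $2\pi$). For an edge $(i,j)$, the link position $\phi_{ij}$ is the angle of the point of $C_i$ closest to $C_j$. A schedule $F=(f,g)$ assigns each circle a starting angle $f(C_i)$ and direction $g(C_i)\in\{1,-1\}$; a robot following it on $C_i$ is at $f(C_i)+g(C_i)2\pi t$ at time $t$. $F$ is a synchronization schedule if $g(C_i)=-g(C_j)$ for adjacent circles and robots following $F$ on adjacent $C_i,C_j$ are at $\phi_{ij},\phi_{ji}$ at exactly the same times. A synchronized communication system (SCS) consists of $n$ robots, initially one per circle, following a synchronization schedule, with the switching rule: when a robot on $C_i$ reaches $\phi_{ij}$ and $C_j$ is empty, it instantly passes to $C_j$ and follows the schedule of $C_j$; if $C_j$ has a robot, they meet and each stays on its circle. A partial SCS arises by letting some robots leave (possibly at different times); remaining robots never leave. A surviving robot $u$ starves if every time $u$ arrives at a link position $\phi_{ij}$ of its current circle $C_i$, the circle $C_j$ is empty; the system is in starvation state if all surviving robots starve. The isolation-resilience is the largest $k$ such that, whichever $k$ robots leave, the system does not fall into starvation state. *)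

From Stdlib Require Import Reals Lra Lia List.
Open Scope R_scope.

(* A system: n unit circles C_0..C_{n-1} with centres (cx i, cy i),
   communication range r, and a schedule F = (f, g):
   f i = starting angle on C_i, g i = direction (+1 / -1). *)
Record system := mkSystem {
  n  : nat;
  cx : nat -> R;
  cy : nat -> R;
  r  : R;
  f  : nat -> R;
  g  : nat -> R
}.

Definition dist (sy : system) (i j : nat) : R :=
  sqrt ((cx sy i - cx sy j) ^ 2 + (cy sy i - cy sy j) ^ 2).

(* Pairwise disjoint unit circles (equal radii: disjoint iff centres at distance > 2). *)
Definition disjoint_circles (sy : system) : Prop :=
  forall i j, (i < n sy)%nat -> (j < n sy)%nat -> i <> j -> 2 < dist sy i j.

Definition valid_system (sy : system) : Prop :=
  0 < r sy /\ disjoint_circles sy /\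
  (forall i, (i < n sy)%nat -> g sy i = 1 \/ g sy i = -1).

Definition adj (sy : system) (i j : nat) : Prop :=
  (i < n sy)%nat /\ (j < n sy)%nat /\ i <> j /\ dist sy i j <= 2 + r sy.

Definition is_path_graph (sy : system) : Prop :=
  exists p : nat -> nat,
    (forall i, (i < n sy)%nat -> (p i < n sy)%nat) /\
    (forall i j, (i < n sy)%nat -> (j < n sy)%nat -> p i = p j -> i = j) /\
    (forall i j, (i < n sy)%nat -> (j < n sy)%nat ->
       (adj sy i j <-> (p i = Datatypes.S (p j) \/ p j = Datatypes.S (p i)))).

Definition angle (sy : system) (i : nat) (t : R) : R :=
  f sy i + g sy i * 2 * PI * t.

Definition pos (sy : system) (i : nat) (t : R) : R * R :=
  (cx sy i + cos (angle sy i t), cy sy i + sin (angle sy i t)).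

Definition closest (sy : system) (i j : nat) : R * R :=
  (cx sy i + (cx sy j - cx sy i) / dist sy i j,
   cy sy i + (cy sy j - cy sy i) / dist sy i j).

Definition at_link (sy : system) (i j : nat) (t : R) : Prop :=
  pos sy i t = closest sy i j.

Definition sync_schedule (sy : system) : Prop :=
  forall i j, adj sy i j ->
    g sy i = - g sy j /\ (forall t, at_link sy i j t <-> at_link sy j i t).

(* ---- Dynamics of a (partial) SCS ----
   Robots are numbered 0..n-1; robot u starts on C_u at time 0.
   L = list of robots that leave, lt u = time at which robot u leaves.
   An execution e : robot -> time -> option circle gives the circle of
   each robot at time t >= 0 (None = has left), *after* processing the
   instantaneous events happening at time t (right-continuous
   convention).  [prev e u t o] says o is the state of u just before t. *)

Definition prev (e : nat -> R -> option nat) (u : nat) (t : R) (o : option nat) : Prop :=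
  (t = 0 /\ o = Some u) \/
  (0 < t /\ exists eps, 0 < eps /\
     forall s, 0 <= s -> t - eps < s -> s < t -> e u s = o).

Definition has_left (L : list nat) (lt : nat -> R) (u : nat) (t : R) : Prop :=
  In u L /\ lt u <= t.

Definition empty_before (sy : system) (e : nat -> R -> option nat) (j : nat) (t : R) : Prop :=
  forall v, (v < n sy)%nat -> ~ prev e v t (Some j).

Definition transition (sy : system) (L : list nat) (lt : nat -> R)
    (e : nat -> R -> option nat) (u : nat) (t : R) (o : option nat) : Prop :=
  (has_left L lt u t -> e u t = None) /\
  (~ has_left L lt u t ->
     match o with
     | None => e u t = None
     | Some i =>
         (forall j, adj sy i j -> at_link sy i j t -> empty_before sy e j t ->
            e u t = Some j) /\
         ((forall j, adj sy i j -> at_link sy i j t -> ~ empty_before sy e j t) ->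
            e u t = Some i)
     end).

Definition execution (sy : system) (L : list nat) (lt : nat -> R)
    (e : nat -> R -> option nat) : Prop :=
  (forall u t, (u < n sy)%nat -> 0 <= t -> exists o, prev e u t o) /\
  (forall u t, (u < n sy)%nat -> 0 <= t ->
     exists eps, 0 < eps /\ forall s, t <= s -> s < t + eps -> e u s = e u t) /\
  (forall u t o, (u < n sy)%nat -> 0 <= t -> prev e u t o ->
     transition sy L lt e u t o).

Definition surviving (sy : system) (L : list nat) (u : nat) : Prop :=
  (u < n sy)%nat /\ ~ In u L.

Definition starves_from (sy : system) (e : nat -> R -> option nat) (T : R) (u : nat) : Prop :=
  forall t i j, T <= t -> prev e u t (Some i) -> adj sy i j -> at_link sy i j t ->
    empty_before sy e j t.

Definition falls_into_starvation (sy : system) (L : list nat)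
    (e : nat -> R -> option nat) : Prop :=
  exists T, 0 <= T /\ forall u, surviving sy L u -> starves_from sy e T u.

Definition departure (sy : system) (k : nat) (L : list nat) (lt : nat -> R) : Prop :=
  NoDup L /\ length L = k /\ (forall u, In u L -> (u < n sy)%nat) /\
  (forall u, In u L -> 0 <= lt u).

Definition tolerates (sy : system) (k : nat) : Prop :=
  (k <= n sy)%nat /\
  forall L lt, departure sy k L lt ->
    forall e, execution sy L lt e -> ~ falls_into_starvation sy L e.

Definition isolation_resilience (sy : system) (k : nat) : Prop :=
  tolerates sy k /\ forall k', tolerates sy k' -> (k' <= k)%nat.

(* If at most n - 2 robots leave, two robots survive. Two survivors never share a
   circle and never swap, so their order along the chain is invariant. If every
   survivor starved, the lower one would cross at each link it reaches; after arriving
   on a circle it next reaches the link towards its other neighbour, because the link it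
   came through recurs only a full period later. So it sweeps up to the top of the chain,
   past the other survivor. Conversely, if all robots but one leave at time 0, the
   remaining robot crosses at every link it meets, and it starves; this greedy walk is a
   genuine execution because consecutive link times on a circle are uniformly separated.
   If all n robots leave, the system starves vacuously. *)

From Pilot Require Import Defs.
From Stdlib Require Import Reals Lra Lia List Classical ClassicalEpsilon.
(* [Defs.dist] must shadow the metric-space [dist] of [Reals] *)
Import Defs.
Open Scope R_scope.

Lemma real_induction (t0 : R) (Q : R -> Prop) :
  Q t0 ->
  (forall t, t0 < t -> (forall s, t0 <= s < t -> Q s) -> Q t) ->
  (forall t, t0 <= t -> Q t -> exists eps, 0 < eps /\ forall s, t <= s < t + eps -> Q s) ->
  forall t, t0 <= t -> Q t.
Proof.
  intros Q0 Qleft Qright t1 Ht1; apply NNPP; intro notQ1.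
  set (E := fun x => t0 <= x <= t1 /\ forall s, t0 <= s <= x -> Q s).
  assert (Et0 : E t0).
  { split; [lra|]. intros s Hs. replace s with t0 by lra. exact Q0. }
  assert (Ebound : bound E) by (exists t1; intros x [Hx _]; lra).
  destruct (completeness E Ebound (ex_intro _ t0 Et0)) as [m [m_ub m_lub]].
  assert (m_ge : t0 <= m) by (apply m_ub; exact Et0).
  assert (m_le : m <= t1) by (apply m_lub; intros x [Hx _]; lra).
  assert (Q_below : forall s, t0 <= s < m -> Q s).
  { intros s Hs. destruct (classic (exists x, E x /\ s <= x)) as [[x [[_ Qx] Hsx]]|noE].
    - apply Qx; lra.
    - assert (m <= s); [|lra].
      apply m_lub; intros x Ex. destruct (Rle_lt_dec x s); [lra|].
      exfalso; apply noE; exists x; split; [exact Ex|lra]. }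
  assert (Qm : Q m).
  { destruct (Req_dec m t0) as [->|]; [exact Q0|]. apply Qleft; [lra|exact Q_below]. }
  destruct (Qright m m_ge Qm) as [eps [eps_pos Q_after]].
  destruct (Req_dec m t1) as [<-|m_lt]; [exact (notQ1 Qm)|].
  set (x := Rmin (m + eps / 2) t1).
  assert (x <= m + eps / 2) by apply Rmin_l.
  assert (x <= t1) by apply Rmin_r.
  assert (m < x) by (apply Rmin_glb_lt; lra).
  assert (x <= m); [|lra].
  apply m_ub; split; [lra|]. intros s Hs.
  destruct (Rlt_le_dec s m); [apply Q_below | apply Q_after]; lra.
Qed.

Lemma cos_period_Z x k : cos (x + 2 * IZR k * PI) = cos x.
Proof.
  assert (Hs : sin (IZR k * PI) = 0) by (apply sin_eq_0_1; exists k; reflexivity).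
  replace (2 * IZR k * PI) with (2 * (IZR k * PI)) by ring.
  rewrite cos_plus, cos_2a_sin, sin_2a, Hs. ring.
Qed.

Lemma sin_period_Z x k : sin (x + 2 * IZR k * PI) = sin x.
Proof.
  assert (Hs : sin (IZR k * PI) = 0) by (apply sin_eq_0_1; exists k; reflexivity).
  replace (2 * IZR k * PI) with (2 * (IZR k * PI)) by ring.
  rewrite sin_plus, cos_2a_sin, sin_2a, Hs. ring.
Qed.

Lemma cos_sin_eq_iff a b :
  cos a = cos b /\ sin a = sin b <-> exists k : Z, a = b + 2 * IZR k * PI.
Proof.
  split.
  - intros [Hc Hs].
    assert (H1 : cos (a - b) = 1).
    { rewrite cos_minus, Hc, Hs. pose proof (sin2_cos2 b). unfold Rsqr in *. lra. }
    replace (a - b) with (2 * ((a - b) / 2)) in H1 by field.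
    rewrite cos_2a_sin in H1.
    assert (H0 : sin ((a - b) / 2) = 0) by nra.
    destruct (sin_eq_0_0 _ H0) as [k Hk]. exists k. lra.
  - intros [k ->]. rewrite cos_period_Z, sin_period_Z. auto.
Qed.

Lemma unit_vector_angle ux uy :
  ux * ux + uy * uy = 1 -> exists th, cos th = ux /\ sin th = uy.
Proof.
  intros Hu.
  assert (Hux : -1 <= ux <= 1) by (split; nra).
  assert (Hsqrt : sqrt (1 - ux²) = Rabs uy).
  { rewrite <- sqrt_Rsqr_abs. f_equal. unfold Rsqr. lra. }
  destruct (Rle_lt_dec 0 uy).
  - exists (acos ux). rewrite cos_acos, sin_acos, Hsqrt, Rabs_right by (auto; lra). auto.
  - exists (- acos ux).
    rewrite cos_neg, sin_neg, cos_acos, sin_acos, Hsqrt, Rabs_left by (auto; lra).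
    split; [reflexivity | ring].
Qed.

Definition unit_lattice (P : R -> Prop) : Prop :=
  exists tau, forall t, P t <-> exists k : Z, t = tau + IZR k.

Definition first_after (P : R -> Prop) (s t : R) : Prop :=
  s < t /\ P t /\ forall t', s < t' < t -> ~ P t'.

Lemma unit_lattice_first_after P s :
  unit_lattice P -> exists t, t <= s + 1 /\ first_after P s t.
Proof.
  intros [tau Htau]. destruct (archimed (s - tau)) as [Hup1 Hup2].
  exists (tau + IZR (up (s - tau))). repeat split; try lra.
  - apply Htau. eauto.
  - intros t' Ht' Pt'. apply Htau in Pt' as [k ->].
    assert (Hlo : IZR (up (s - tau) - 1) < IZR k) by (rewrite minus_IZR; lra).
    assert (Hhi : IZR k < IZR (up (s - tau))) by lra.
    apply lt_IZR in Hlo. apply lt_IZR in Hhi. lia.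
Qed.

Lemma unit_lattice_spacing P s t :
  unit_lattice P -> P s -> P t -> s < t -> s + 1 <= t.
Proof.
  intros [tau Htau] Ps Pt Hst.
  apply Htau in Ps as [k1 ->]. apply Htau in Pt as [k2 ->].
  assert (Hk : IZR k1 < IZR k2) by lra. apply lt_IZR in Hk.
  assert (IZR (k1 + 1) <= IZR k2) by (apply IZR_le; lia). rewrite plus_IZR in *. lra.
Qed.

Lemma unit_lattice_separation P P' :
  unit_lattice P -> unit_lattice P' ->
  exists delta, 0 < delta /\ forall s t, P s -> P' t -> s < t -> delta <= t - s.
Proof.
  intros [tau Htau] [tau' Htau'].
  (* the least positive element of [tau' - tau + Z] *)
  set (x := tau' - tau). destruct (archimed (- x)) as [Hup1 Hup2].
  exists (x + IZR (up (- x))). split; [lra|].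
  intros s t Ps Pt Hst. apply Htau in Ps as [k1 ->]. apply Htau' in Pt as [k2 ->].
  assert (Hk : IZR (up (- x) - 1) < IZR (k2 - k1))
    by (rewrite !minus_IZR; unfold x in *; lra).
  apply lt_IZR in Hk. assert (Hle : IZR (up (- x)) <= IZR (k2 - k1)) by (apply IZR_le; lia).
  rewrite minus_IZR in Hle. unfold x in *. lra.
Qed.

Lemma first_after_or P P' s t t' :
  first_after P s t -> first_after P' s t' ->
  exists u, first_after (fun x => P x \/ P' x) s u.
Proof.
  intros [Hst [Pt Pbefore]] [Hst' [Pt' P'before]].
  destruct (Rle_lt_dec t t').
  - exists t. repeat split; auto. intros x Hx [Px|Px].
    + exact (Pbefore x Hx Px).
    + apply (P'before x); [lra | exact Px].
  - exists t'. repeat split; auto. intros x Hx [Px|Px].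
    + apply (Pbefore x); [lra | exact Px].
    + exact (P'before x Hx Px).
Qed.

Lemma first_after_ext P P' s t :
  (forall x, P x <-> P' x) -> first_after P s t -> first_after P' s t.
Proof.
  intros HPP' [Hst [Pt Pbefore]]. repeat split; auto.
  - apply HPP'; exact Pt.
  - intros x Hx P'x. apply (Pbefore x Hx), HPP', P'x.
Qed.

Lemma uniform_positive_bound (m : nat) (Q : nat -> R -> Prop) :
  (forall i d d', 0 < d' <= d -> Q i d -> Q i d') ->
  (forall i, (i < m)%nat -> exists d, 0 < d /\ Q i d) ->
  exists d, 0 < d /\ forall i, (i < m)%nat -> Q i d.
Proof.
  intros Qmono. induction m as [|m IH]; intros Hex.
  - exists 1. split; [lra | intros; lia].
  - destruct IH as [d [d_pos Qd]]; [intros i Hi; apply Hex; lia|].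
    destruct (Hex m (Nat.lt_succ_diag_r m)) as [dm [dm_pos Qdm]].
    assert (Hmin : 0 < Rmin d dm) by (apply Rmin_glb_lt; lra).
    exists (Rmin d dm). split; [exact Hmin|]. intros i Hi.
    destruct (Nat.eq_dec i m) as [->|].
    + apply (Qmono m dm); [split; [exact Hmin | apply Rmin_r] | exact Qdm].
    + apply (Qmono i d); [split; [exact Hmin | apply Rmin_l] | apply Qd; lia].
Qed.

Lemma dist_sym sy i j : dist sy i j = dist sy j i.
Proof. unfold dist. f_equal. ring. Qed.

Lemma dist_sq sy i j : dist sy i j * dist sy i j =
  (cx sy j - cx sy i) * (cx sy j - cx sy i) + (cy sy j - cy sy i) * (cy sy j - cy sy i).
Proof.
  unfold dist. rewrite sqrt_sqrt; [ring | apply Rplus_le_le_0_compat; apply pow2_ge_0].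
Qed.

Lemma adj_sym sy i j : adj sy i j -> adj sy j i.
Proof. intros (Hi & Hj & Hij & Hd). repeat split; auto. rewrite dist_sym; exact Hd. Qed.

Lemma adj_bounds sy i j : adj sy i j -> (i < n sy)%nat /\ (j < n sy)%nat.
Proof. intros (Hi & Hj & _). auto. Qed.

Lemma adj_dist_pos sy i j : valid_system sy -> adj sy i j -> 0 < dist sy i j.
Proof.
  intros (_ & Hdisj & _) (Hi & Hj & Hij & _). specialize (Hdisj i j Hi Hj Hij). lra.
Qed.

Lemma at_link_iff sy i j t : at_link sy i j t <->
  cos (angle sy i t) = (cx sy j - cx sy i) / dist sy i j /\
  sin (angle sy i t) = (cy sy j - cy sy i) / dist sy i j.
Proof.
  unfold at_link, pos, closest. split.
  - intros E. injection E as E1 E2. split; lra.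
  - intros [-> ->]. reflexivity.
Qed.

Lemma at_link_unit_lattice sy i j :
  valid_system sy -> adj sy i j -> unit_lattice (at_link sy i j).
Proof.
  intros Hvalid Hadj.
  pose proof (adj_dist_pos sy i j Hvalid Hadj) as Hd.
  assert (Hg : g sy i = 1 \/ g sy i = -1)
    by (destruct Hvalid as (_ & _ & Hg); apply Hg, (adj_bounds _ _ _ Hadj)).
  destruct (unit_vector_angle ((cx sy j - cx sy i) / dist sy i j)
                              ((cy sy j - cy sy i) / dist sy i j)) as [th [Hc Hs]].
  { pose proof (dist_sq sy i j) as Hsq.
    apply (Rmult_eq_reg_r (dist sy i j * dist sy i j)); [|nra].
    field_simplify; lra. }
  pose proof PI_RGT_0.
  exists (g sy i * (th - f sy i) / (2 * PI)). intros t.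
  rewrite at_link_iff, <- Hc, <- Hs, cos_sin_eq_iff.
  unfold angle. destruct Hg as [-> | ->]; split; intros [k Hk].
  - exists k. apply (Rmult_eq_reg_l (2 * PI)); [|lra]. field_simplify; [lra | lra].
  - exists k. rewrite Hk. field. lra.
  - exists (- k)%Z. rewrite opp_IZR.
    apply (Rmult_eq_reg_l (2 * PI)); [|lra]. field_simplify; [lra | lra].
  - exists (- k)%Z. rewrite Hk, opp_IZR. field. lra.
Qed.

Lemma adj_of_closest_eq sy i j k :
  valid_system sy -> adj sy i j -> adj sy i k -> j <> k ->
  closest sy i j = closest sy i k -> adj sy j k.
Proof.
  intros Hvalid Hij Hik Hjk Heq.
  pose proof (adj_dist_pos _ _ _ Hvalid Hij) as Hdj.
  pose proof (adj_dist_pos _ _ _ Hvalid Hik) as Hdk.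
  destruct Hij as (Hi & Hj & _ & Hdj_le). destruct Hik as (_ & Hk & _ & Hdk_le).
  pose proof (proj1 Hvalid) as Hr.
  repeat split; auto.
  unfold closest in Heq. injection Heq as Ex Ey.
  set (dj := dist sy i j) in *. set (dk := dist sy i k) in *.
  pose proof (dist_sq sy i j) as Sj. fold dj in Sj.
  (* [C_j] and [C_k] lie on the same ray from the centre of [C_i] *)
  assert (Ax : cx sy k - cx sy i = (cx sy j - cx sy i) * dk / dj).
  { apply (Rmult_eq_reg_r (/ dk)); [|apply Rinv_neq_0_compat; lra].
    replace ((cx sy j - cx sy i) * dk / dj * / dk) with ((cx sy j - cx sy i) / dj)
      by (field; lra). unfold Rdiv in Ex. lra. }
  assert (Ay : cy sy k - cy sy i = (cy sy j - cy sy i) * dk / dj).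
  { apply (Rmult_eq_reg_r (/ dk)); [|apply Rinv_neq_0_compat; lra].
    replace ((cy sy j - cy sy i) * dk / dj * / dk) with ((cy sy j - cy sy i) / dj)
      by (field; lra). unfold Rdiv in Ey. lra. }
  assert (Hjk2 : (cx sy j - cx sy k) ^ 2 + (cy sy j - cy sy k) ^ 2 = (dj - dk) ^ 2).
  { replace (cx sy j - cx sy k) with ((cx sy j - cx sy i) - (cx sy k - cx sy i)) by ring.
    replace (cy sy j - cy sy k) with ((cy sy j - cy sy i) - (cy sy k - cy sy i)) by ring.
    rewrite Ax, Ay.
    set (a := cx sy j - cx sy i) in *. set (b := cy sy j - cy sy i) in *.
    replace ((a - a * dk / dj) ^ 2 + (b - b * dk / dj) ^ 2)
      with ((a * a + b * b) * (dj - dk) ^ 2 / (dj * dj)) by (field; lra).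
    rewrite <- Sj. field. lra. }
  unfold dist. rewrite Hjk2, <- Rsqr_pow2, sqrt_Rsqr_abs.
  apply Rabs_le. lra.
Qed.

Definition link_time (sy : system) (c : nat) (t : R) : Prop :=
  exists d, adj sy c d /\ at_link sy c d t.

Lemma links_below_first_after sy c s m :
  valid_system sy -> (exists d, (d < m)%nat /\ adj sy c d) ->
  exists t, first_after (fun x => exists d, (d < m)%nat /\ adj sy c d /\ at_link sy c d x) s t.
Proof.
  intros Hvalid. induction m as [|m IH]; intros [d [Hdm Hd]]; [lia|].
  destruct (classic (adj sy c m)) as [Hm|Hm].
  - destruct (unit_lattice_first_after _ s (at_link_unit_lattice sy c m Hvalid Hm))
      as [tm [_ Htm]].
    destruct (classic (exists d', (d' < m)%nat /\ adj sy c d')) as [Hsome|Hnone].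
    + destruct (IH Hsome) as [t Ht].
      destruct (first_after_or _ _ s t tm Ht Htm) as [u Hu].
      exists u. eapply first_after_ext; [|exact Hu].
      intros x. split.
      * intros [[d' (Hd' & Had' & Hl')]|Hl]; [exists d'; split; [lia|auto] | exists m; auto].
      * intros [d' (Hd' & Had' & Hl')].
        destruct (Nat.eq_dec d' m) as [->|]; [right; exact Hl'|].
        left. exists d'. split; [lia | auto].
    + exists tm. eapply first_after_ext; [|exact Htm].
      intros x. split; [intros Hl; exists m; auto|].
      intros [d' (Hd' & Had' & Hl')].
      destruct (Nat.eq_dec d' m) as [->|]; [exact Hl'|].
      exfalso. apply Hnone. exists d'. split; [lia | exact Had'].
  - destruct IH as [t Ht].
    { exists d. split; [|exact Hd].
      destruct (Nat.eq_dec d m) as [->|]; [contradiction | lia]. }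
    exists t. eapply first_after_ext; [|exact Ht].
    intros x. split.
    + intros [d' (Hd' & Hl)]. exists d'. split; [lia | exact Hl].
    + intros [d' (Hd' & Had' & Hl')]. exists d'. split; [|auto].
      destruct (Nat.eq_dec d' m) as [->|]; [contradiction | lia].
Qed.

Lemma link_time_first_after sy c s :
  valid_system sy -> (exists d, adj sy c d) -> exists t, first_after (link_time sy c) s t.
Proof.
  intros Hvalid [d Hd].
  destruct (links_below_first_after sy c s (n sy) Hvalid) as [t Ht].
  { exists d. split; [apply (adj_bounds _ _ _ Hd) | exact Hd]. }
  exists t. eapply first_after_ext; [|exact Ht].
  intros x. split.
  - intros [d' (_ & Hl)]. exists d'. exact Hl.
  - intros [d' Hl]. exists d'. split; [apply (adj_bounds _ _ _ (proj1 Hl)) | exact Hl].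
Qed.

Lemma link_times_separated sy : valid_system sy ->
  exists delta, 0 < delta /\ forall c d d' s t,
    adj sy c d -> adj sy c d' -> at_link sy c d s -> at_link sy c d' t -> s < t ->
    delta <= t - s.
Proof.
  intros Hvalid.
  set (separated (delta : R) c d d' := forall s t,
         adj sy c d -> adj sy c d' -> at_link sy c d s -> at_link sy c d' t -> s < t ->
         delta <= t - s).
  assert (Hmono : forall c d d' delta delta', 0 < delta' <= delta ->
                  separated delta c d d' -> separated delta' c d d').
  { intros c d d' delta delta' Hdelta Hsep s t Hcd Hcd' Hs Ht Hst.
    specialize (Hsep s t Hcd Hcd' Hs Ht Hst). lra. }
  destruct (uniform_positive_bound (n sy)
              (fun c delta => forall d, (d < n sy)%nat -> forall d', (d' < n sy)%nat ->
                                           separated delta c d d'))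
    as [delta [Hdelta Hsep]].
  { intros c delta delta' Hdelta Hsep d Hd d' Hd'. apply (Hmono c d d' delta); auto. }
  { intros c _.
    apply (uniform_positive_bound (n sy)
             (fun d delta => forall d', (d' < n sy)%nat -> separated delta c d d')).
    { intros d delta delta' Hdelta Hsep d' Hd'. apply (Hmono c d d' delta); auto. }
    intros d _.
    apply (uniform_positive_bound (n sy) (fun d' delta => separated delta c d d')).
    { intros d' delta delta'. apply Hmono. }
    intros d' _.
    destruct (classic (adj sy c d /\ adj sy c d')) as [[Hcd Hcd']|Hnot].
    - destruct (unit_lattice_separation _ _ (at_link_unit_lattice sy c d Hvalid Hcd)
                  (at_link_unit_lattice sy c d' Hvalid Hcd')) as [delta [Hdelta Hsep]].
      exists delta. split; [exact Hdelta|]. intros s t _ _. apply Hsep.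
    - exists 1. split; [lra|]. intros s t Hcd Hcd'. exfalso. auto. }
  exists delta. split; [exact Hdelta|].
  intros c d d' s t Hcd Hcd'.
  destruct (adj_bounds _ _ _ Hcd), (adj_bounds _ _ _ Hcd').
  apply Hsep; auto.
Qed.

Lemma prev_common_time e u v t o o' :
  0 < t -> prev e u t o -> prev e v t o' -> exists s, 0 <= s < t /\ e u s = o /\ e v s = o'.
Proof.
  intros Ht [[]|[_ [eps [Heps He]]]] [[]|[_ [eps' [Heps' He']]]]; try lra.
  set (s := Rmax 0 (t - Rmin eps eps' / 2)).
  assert (Rmin eps eps' <= eps) by apply Rmin_l.
  assert (Rmin eps eps' <= eps') by apply Rmin_r.
  assert (0 < Rmin eps eps') by (apply Rmin_glb_lt; lra).
  assert (0 <= s) by apply Rmax_l.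
  assert (t - Rmin eps eps' / 2 <= s) by apply Rmax_r.
  assert (s < t) by (apply Rmax_lub_lt; lra).
  exists s. split; [lra|]. split; [apply He | apply He']; lra.
Qed.

Lemma prev_unique e u t o o' : prev e u t o -> prev e u t o' -> o = o'.
Proof.
  intros Hprev Hprev'. destruct (Rle_lt_dec t 0) as [Ht|Ht].
  - destruct Hprev as [[_ ->]|[]], Hprev' as [[_ ->]|[]]; auto; lra.
  - destruct (prev_common_time e u u t o o' Ht Hprev Hprev') as (s & _ & <- & <-).
    reflexivity.
Qed.

Lemma prev_of_constant e u t o a v :
  0 <= a < t -> (forall s, a <= s < t -> e u s = v) -> prev e u t o -> o = v.
Proof.
  intros Ha Hv Hprev. apply (prev_unique e u t o v Hprev).
  right. split; [lra|]. exists (t - a). split; [lra|].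
  intros s _ Hs1 Hs2. apply Hv. lra.
Qed.

Section Execution.
Variables (sy : system) (L : list nat) (lt : nat -> R) (e : nat -> R -> option nat).
Hypothesis Hexec : execution sy L lt e.

Lemma survivor_transition u t i :
  surviving sy L u -> 0 <= t -> prev e u t (Some i) ->
  e u t = Some i \/
  exists j, adj sy i j /\ at_link sy i j t /\ empty_before sy e j t /\ e u t = Some j.
Proof.
  intros [Hu HuL] Ht Hprev.
  pose proof Hexec as (_ & _ & Htrans).
  destruct (Htrans u t (Some i) Hu Ht Hprev) as [_ Hstay].
  destruct Hstay as [Hmove Hkeep]; [intros [HL _]; contradiction|].
  destruct (classic (exists j, adj sy i j /\ at_link sy i j t /\ empty_before sy e j t))
    as [[j (Hij & Hl & Hemp)]|Hnone].
  - right. exists j. auto.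
  - left. apply Hkeep. intros j Hij Hl Hemp. apply Hnone. eauto.
Qed.

Lemma survivor_moves_to_empty u t i j :
  surviving sy L u -> 0 <= t -> prev e u t (Some i) ->
  adj sy i j -> at_link sy i j t -> empty_before sy e j t -> e u t = Some j.
Proof.
  intros [Hu HuL] Ht Hprev Hij Hl Hemp.
  pose proof Hexec as (_ & _ & Htrans).
  destruct (Htrans u t (Some i) Hu Ht Hprev) as [_ Hstay].
  destruct Hstay as [Hmove _]; [intros [HL _]; contradiction|].
  exact (Hmove j Hij Hl Hemp).
Qed.

Lemma survivor_stays u c s0 s1 :
  surviving sy L u -> 0 <= s0 -> e u s0 = Some c ->
  (forall t, s0 < t < s1 -> ~ link_time sy c t) ->
  forall t, s0 <= t < s1 -> e u t = Some c.
Proof.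
  intros Hsurv Hs0 He0 Hnolink.
  pose proof Hexec as (Hprev & Hright & _).
  enough (H : forall t, s0 <= t -> t < s1 -> e u t = Some c) by (intros t []; auto).
  apply (real_induction s0 (fun t => t < s1 -> e u t = Some c)); [intros; exact He0| |].
  - intros t Ht IH Hts1.
    destruct (Hprev u t (proj1 Hsurv) ltac:(lra)) as [o Ho].
    assert (o = Some c) as ->.
    { apply (prev_of_constant e u t o s0 (Some c)); [lra | | exact Ho].
      intros s Hs. apply IH; lra. }
    destruct (survivor_transition u t c Hsurv ltac:(lra) Ho) as [Hc|[j (Hcj & Hl & _)]];
      [exact Hc|].
    exfalso. apply (Hnolink t); [lra|]. exists j. auto.
  - intros t Ht Qt.
    destruct (Hright u t (proj1 Hsurv) ltac:(lra)) as [eps [Heps He]].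
    exists eps. split; [exact Heps|]. intros s Hs Hss1. rewrite He by lra. apply Qt. lra.
Qed.

Lemma execution_pair_invariant A B (Inv : option nat -> option nat -> Prop) :
  (A < n sy)%nat -> (B < n sy)%nat ->
  Inv (Some A) (Some B) ->
  (forall t oA oB, 0 <= t -> prev e A t oA -> prev e B t oB -> Inv oA oB ->
                   Inv (e A t) (e B t)) ->
  forall t, 0 <= t -> Inv (e A t) (e B t).
Proof.
  intros HA HB Hinit Hstep.
  pose proof Hexec as (Hprev & Hright & _).
  apply (real_induction 0 (fun t => Inv (e A t) (e B t))).
  - apply (Hstep 0 (Some A) (Some B)); [lra | left; auto | left; auto | exact Hinit].
  - intros t Ht IH.
    destruct (Hprev A t HA ltac:(lra)) as [oA HoA].
    destruct (Hprev B t HB ltac:(lra)) as [oB HoB].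
    apply (Hstep t oA oB); [lra | exact HoA | exact HoB|].
    destruct (prev_common_time e A B t oA oB Ht HoA HoB) as (s & Hs & <- & <-).
    apply IH. lra.
  - intros t Ht Qt.
    destruct (Hright A t HA Ht) as [epsA [HepsA HeA]].
    destruct (Hright B t HB Ht) as [epsB [HepsB HeB]].
    exists (Rmin epsA epsB). split; [apply Rmin_glb_lt; lra|].
    assert (Rmin epsA epsB <= epsA) by apply Rmin_l.
    assert (Rmin epsA epsB <= epsB) by apply Rmin_r.
    intros s Hs. rewrite HeA, HeB by lra. exact Qt.
Qed.

End Execution.

Lemma two_survivors sy k L lt :
  departure sy k L lt -> (k + 2 <= n sy)%nat ->
  exists A B, A <> B /\ surviving sy L A /\ surviving sy L B.
Proof.
  intros (Hnodup & Hlen & HLn & _) Hk.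
  assert (Hsurv : forall D, incl D (seq 0 (n sy)) -> (length D < n sy - k)%nat ->
                  exists u, (u < n sy)%nat /\ ~ In u L /\ ~ In u D).
  { intros D HD HlenD. apply NNPP. intro Hnone.
    assert (Hcover : incl (seq 0 (n sy)) (D ++ L)).
    { intros u Hu. apply in_seq in Hu. apply in_or_app.
      destruct (classic (In u D)); [left; auto|right].
      apply NNPP. intro HuL. apply Hnone. exists u. split; [lia | auto]. }
    pose proof (NoDup_incl_length (seq_NoDup (n sy) 0) Hcover).
    rewrite length_seq, length_app in *. lia. }
  destruct (Hsurv nil) as [A (HA & HAL & _)]; [intros x []| simpl; lia|].
  destruct (Hsurv (A :: nil)) as [B (HB & HBL & HBA)];
    [intros x [<-|[]]; apply in_seq; lia | simpl; lia|].
  exists A, B. split; [intros ->; apply HBA; left; auto|]. split; split; auto.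
Qed.

Section Chain.
Variables (sy : system) (p : nat -> nat).
Hypothesis Hvalid : valid_system sy.
Hypothesis Hsync : sync_schedule sy.
Hypothesis label_lt : forall i, (i < n sy)%nat -> (p i < n sy)%nat.
Hypothesis label_inj :
  forall i j, (i < n sy)%nat -> (j < n sy)%nat -> p i = p j -> i = j.
Hypothesis adj_iff_label : forall i j, (i < n sy)%nat -> (j < n sy)%nat ->
  (adj sy i j <-> (p i = S (p j) \/ p j = S (p i))).
Hypothesis n_ge2 : (2 <= n sy)%nat.

Lemma label_surj l : (l < n sy)%nat -> exists c, (c < n sy)%nat /\ p c = l.
Proof.
  intros Hl.
  assert (Hnodup : NoDup (map p (seq 0 (n sy)))).
  { apply NoDup_map_NoDup_ForallPairs; [|apply seq_NoDup].
    intros a b Ha Hb. apply in_seq in Ha. apply in_seq in Hb. apply label_inj; lia. }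
  assert (Hincl : incl (map p (seq 0 (n sy))) (seq 0 (n sy))).
  { intros x Hx. apply in_map_iff in Hx as [y [<- Hy]]. apply in_seq in Hy.
    apply in_seq. specialize (label_lt y). lia. }
  assert (Hin : In l (map p (seq 0 (n sy)))).
  { apply (NoDup_length_incl (l' := seq 0 (n sy)) Hnodup); [| exact Hincl | apply in_seq; lia].
    rewrite length_map, length_seq. lia. }
  apply in_map_iff in Hin as [c [Hc Hc']]. apply in_seq in Hc'.
  exists c. split; [lia | exact Hc].
Qed.

Lemma adj_label i j : adj sy i j -> p i = S (p j) \/ p j = S (p i).
Proof.
  intros Hij. destruct (adj_bounds _ _ _ Hij). apply adj_iff_label; auto.
Qed.

Lemma label_neq i j : (i < n sy)%nat -> (j < n sy)%nat -> i <> j -> p i <> p j.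
Proof. intros Hi Hj Hij E. apply Hij, label_inj; auto. Qed.

Lemma exists_neighbor c : (c < n sy)%nat -> exists d, adj sy c d.
Proof.
  intros Hc. pose proof (label_lt c Hc).
  destruct (Nat.lt_ge_cases (S (p c)) (n sy)) as [Htop|Htop].
  - destruct (label_surj (S (p c)) Htop) as [d [Hd Hpd]].
    exists d. apply adj_iff_label; auto.
  - destruct (label_surj (p c - 1)) as [d [Hd Hpd]]; [lia|].
    exists d. apply adj_iff_label; auto. lia.
Qed.

Lemma link_unique c j k t :
  adj sy c j -> adj sy c k -> at_link sy c j t -> at_link sy c k t -> j = k.
Proof.
  intros Hcj Hck Hj Hk. apply NNPP. intro Hjk.
  assert (Hjk_adj : adj sy j k).
  { apply (adj_of_closest_eq sy c j k Hvalid Hcj Hck Hjk).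
    unfold at_link in *. rewrite <- Hj, <- Hk. reflexivity. }
  (* two distinct neighbours in a chain have labels two apart *)
  destruct (adj_bounds _ _ _ Hcj), (adj_bounds _ _ _ Hck).
  pose proof (adj_label _ _ Hcj). pose proof (adj_label _ _ Hck).
  pose proof (adj_label _ _ Hjk_adj). pose proof (label_neq j k ltac:(auto) ltac:(auto) Hjk).
  lia.
Qed.

Section Walk.
Variables (L : list nat) (lt : nat -> R) (e : nat -> R -> option nat).
Hypothesis Hexec : execution sy L lt e.

Lemma starving_moves u T s c :
  surviving sy L u -> starves_from sy e T u -> T <= s -> 0 <= s ->
  e u s = Some c -> (c < n sy)%nat ->
  exists t d, first_after (link_time sy c) s t /\ adj sy c d /\ at_link sy c d t /\
              e u t = Some d.
Proof.
  intros Hsurv Hstarve HTs Hs Hes Hc.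
  destruct (link_time_first_after sy c s Hvalid (exists_neighbor c Hc)) as [t Ht].
  pose proof Ht as (Hst & [d [Hcd Hl]] & Hnolink).
  exists t, d. split; [exact Ht|]. split; [exact Hcd|]. split; [exact Hl|].
  pose proof Hexec as (Hprev & _).
  destruct (Hprev u t (proj1 Hsurv) ltac:(lra)) as [o Ho].
  assert (o = Some c) as ->.
  { apply (prev_of_constant e u t o s (Some c)); [lra | | exact Ho].
    apply (survivor_stays sy L lt e Hexec u c s t Hsurv Hs Hes Hnolink). }
  apply (survivor_moves_to_empty sy L lt e Hexec u t c d Hsurv ltac:(lra) Ho Hcd Hl).
  apply (Hstarve t c d); auto. lra.
Qed.

Definition arrival (u : nat) (s : R) (c c' : nat) : Prop :=
  0 <= s /\ e u s = Some c /\ adj sy c c' /\ at_link sy c c' s.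

Lemma arrival_of_crossing u t c d :
  0 <= t -> e u t = Some d -> adj sy c d -> at_link sy c d t -> arrival u t d c.
Proof.
  intros Ht Hed Hcd Hl. split; [exact Ht|]. split; [exact Hed|].
  split; [apply adj_sym; exact Hcd | apply (Hsync c d Hcd); exact Hl].
Qed.

Lemma starving_step u T s c c' :
  surviving sy L u -> starves_from sy e T u -> T <= s -> arrival u s c c' ->
  exists s' d, s < s' /\ arrival u s' d c /\
               (d = c' -> forall d', adj sy c d' -> d' = c').
Proof.
  intros Hsurv Hstarve HTs (Hs & Hes & Hcc' & Hlc').
  destruct (starving_moves u T s c Hsurv Hstarve HTs Hs Hes (proj1 (adj_bounds _ _ _ Hcc')))
    as [t [d ((Hst & _ & Hnolink) & Hcd & Hld & Hed)]].
  exists t, d. split; [exact Hst|]. split; [apply arrival_of_crossing; auto; lra|].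
  intros -> d' Hcd'. apply NNPP. intro Hd'.
  (* [C_c] offers its other link within one period, and the link to [c'] recurs only
     one full period later, so both would be reached at the same time *)
  destruct (unit_lattice_first_after _ s (at_link_unit_lattice sy c d' Hvalid Hcd'))
    as [t' [Ht'1 (Ht's & Hl' & _)]].
  assert (t <= t').
  { destruct (Rle_lt_dec t t') as [|Hlt]; [assumption|].
    exfalso. apply (Hnolink t'); [lra | exists d'; auto]. }
  pose proof (unit_lattice_spacing _ s t (at_link_unit_lattice sy c c' Hvalid Hcc')
                Hlc' Hld Hst).
  assert (t' = t) as -> by lra.
  apply Hd'. exact (link_unique c d' c' t Hcd' Hcc' Hl' Hld).
Qed.

Lemma starving_reaches_top u T s c c' :
  surviving sy L u -> starves_from sy e T u -> T <= s -> arrival u s c c' ->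
  exists t x, T <= t /\ e u t = Some x /\ p x = (n sy - 1)%nat.
Proof.
  intros Hsurv Hstarve. revert s c c'.
  (* potential: steps left before reaching the top label, bouncing once at label 0 *)
  enough (H : forall k s c c', T <= s -> arrival u s c c' ->
            (p c' < p c /\ k = n sy - 1 - p c \/ p c < p c' /\ k = n sy - 1 + p c)%nat ->
            exists t x, T <= t /\ e u t = Some x /\ p x = (n sy - 1)%nat).
  { intros s c c' HTs Harr. pose proof Harr as (_ & _ & Hcc' & _).
    destruct (adj_label _ _ Hcc'); [apply (H (n sy - 1 - p c)%nat s c c') |
                                     apply (H (n sy - 1 + p c)%nat s c c')]; auto; lia. }
  induction k as [|k IH]; intros s c c' HTs Harr Hk;
    pose proof Harr as (_ & Hes & Hcc' & _);
    destruct (adj_bounds _ _ _ Hcc') as [Hc Hc']; pose proof (label_lt c Hc).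
  - exists s, c. repeat split; auto. lia.
  - destruct (starving_step u T s c c' Hsurv Hstarve HTs Harr)
      as [s' [d (Hss' & Harr' & Hbounce)]].
    pose proof Harr' as (_ & _ & Hdc & _). destruct (adj_bounds _ _ _ Hdc) as [Hd _].
    pose proof (adj_label _ _ Hcc'). pose proof (adj_label _ _ Hdc).
    apply (IH s' d c); [lra | exact Harr' |].
    destruct (Nat.eq_dec d c') as [->|Hdc'].
    + assert (Hlabel : forall l, (l < n sy)%nat -> (l = S (p c) \/ p c = S l) -> l = p c').
      { intros l Hl Hadjl. destruct (label_surj l Hl) as [d' [Hd' <-]].
        f_equal. apply (Hbounce eq_refl). apply adj_iff_label; auto; lia. }
      destruct (Nat.eq_dec (p c) 0) as [Hbottom | Hpos].
      * lia.
      * pose proof (Hlabel (p c - 1)%nat ltac:(lia) ltac:(lia)).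
        destruct (Nat.lt_ge_cases (S (p c)) (n sy)) as [Htop | Htop]; [|lia].
        pose proof (Hlabel (S (p c)) Htop ltac:(lia)). lia.
    + pose proof (label_neq d c' Hd Hc' Hdc'). lia.
Qed.

Lemma survivors_step A B t a' b' :
  surviving sy L A -> surviving sy L B -> 0 <= t ->
  prev e A t (Some a') -> prev e B t (Some b') -> a' <> b' ->
  exists a b, e A t = Some a /\ e B t = Some b /\ a <> b /\
    (a = a' \/ adj sy a' a /\ a <> b') /\ (b = b' \/ adj sy b' b /\ b <> a').
Proof.
  intros HA HB Ht HpA HpB Ha'b'.
  assert (HA_blocks : forall j, empty_before sy e j t -> j <> a').
  { intros j Hemp ->. exact (Hemp A (proj1 HA) HpA). }
  assert (HB_blocks : forall j, empty_before sy e j t -> j <> b').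
  { intros j Hemp ->. exact (Hemp B (proj1 HB) HpB). }
  destruct (survivor_transition sy L lt e Hexec A t a' HA Ht HpA)
    as [EA|[a (Ha'a & Hla & Hempa & EA)]];
  destruct (survivor_transition sy L lt e Hexec B t b' HB Ht HpB)
    as [EB|[b (Hb'b & Hlb & Hempb & EB)]].
  - exists a', b'. intuition.
  - exists a', b. pose proof (HA_blocks b Hempb). intuition.
  - exists a, b'. pose proof (HB_blocks a Hempa). intuition.
  - exists a, b. pose proof (HA_blocks b Hempb). pose proof (HB_blocks a Hempa).
    split; [exact EA|]. split; [exact EB|]. split; [|tauto]. intros <-.
    (* both would enter the same circle through two different links at once *)
    apply Ha'b', (link_unique a a' b' t); try apply adj_sym; auto.
    + apply (Hsync a' a Ha'a); exact Hla.
    + apply (Hsync b' a Hb'b); exact Hlb.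
Qed.

Lemma survivors_keep_order A B :
  surviving sy L A -> surviving sy L B -> (p A < p B)%nat ->
  forall t, 0 <= t -> exists a b, e A t = Some a /\ e B t = Some b /\
    (a < n sy)%nat /\ (b < n sy)%nat /\ (p a < p b)%nat.
Proof.
  intros HA HB HAB.
  apply (execution_pair_invariant sy L lt e Hexec A B
    (fun oA oB => exists a b, oA = Some a /\ oB = Some b /\
       (a < n sy)%nat /\ (b < n sy)%nat /\ (p a < p b)%nat) (proj1 HA) (proj1 HB)).
  { exists A, B. repeat split; auto; [apply HA | apply HB]. }
  intros t oA oB Ht HpA HpB (a' & b' & -> & -> & Ha' & Hb' & Ha'b').
  assert (Hneq : a' <> b') by (intros ->; lia).
  destruct (survivors_step A B t a' b' HA HB Ht HpA HpB Hneq)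
    as (a & b & EA & EB & Hab & Hmove_a & Hmove_b).
  assert (Ha : (a < n sy)%nat /\
               (p a = p a' \/ (p a = S (p a') \/ p a' = S (p a)) /\ p a <> p b')).
  { destruct Hmove_a as [->|[Ha'a Hab']]; [auto|].
    destruct (adj_bounds _ _ _ Ha'a) as [_ Ha].
    split; [exact Ha|]. right. split; [apply adj_label in Ha'a; lia | apply label_neq; auto]. }
  assert (Hb : (b < n sy)%nat /\
               (p b = p b' \/ (p b = S (p b') \/ p b' = S (p b)) /\ p b <> p a')).
  { destruct Hmove_b as [->|[Hb'b Hba']]; [auto|].
    destruct (adj_bounds _ _ _ Hb'b) as [_ Hb].
    split; [exact Hb|]. right. split; [apply adj_label in Hb'b; lia | apply label_neq; auto]. }
  exists a, b. repeat split; auto; try tauto.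
  pose proof (label_neq a b (proj1 Ha) (proj1 Hb) Hab). lia.
Qed.

End Walk.

Lemma tolerates_n_minus_2 : tolerates sy (n sy - 2).
Proof.
  split; [lia|]. intros L lt Hdep e Hexec (T & HT & Hstarve).
  enough (Hlow : forall A B, surviving sy L A -> surviving sy L B -> (p A < p B)%nat -> False).
  { destruct (two_survivors sy (n sy - 2) L lt Hdep ltac:(lia)) as (A & B & HAB & HA & HB).
    destruct (proj1 (Nat.lt_gt_cases (p A) (p B)) (label_neq A B (proj1 HA) (proj1 HB) HAB))
      as [Hlt|Hgt]; [exact (Hlow A B HA HB Hlt) | exact (Hlow B A HB HA Hgt)]. }
  intros A B HA HB HAB.
  destruct (survivors_keep_order L lt e Hexec A B HA HB HAB T HT) as (a & b & EA & _ & Ha & _).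
  destruct (starving_moves L lt e Hexec A T T a HA (Hstarve A HA) (Rle_refl T) HT EA Ha)
    as (t & d & (HTt & _) & Had & Hld & Ed).
  destruct (starving_reaches_top L lt e Hexec A T t d a HA (Hstarve A HA))
    as (t' & x & HTt' & Ex & Hx); [lra | apply arrival_of_crossing; auto; lra|].
  destruct (survivors_keep_order L lt e Hexec A B HA HB HAB t')
    as (a' & b' & EA' & _ & _ & Hb' & Hab'); [lra|].
  rewrite Ex in EA'. injection EA' as <-. pose proof (label_lt b' Hb'). lia.
Qed.

Definition next_link_event (c : nat) (s : R) : nat * R :=
  epsilon (inhabits (0%nat, 0)) (fun dt =>
    adj sy c (fst dt) /\ at_link sy c (fst dt) (snd dt) /\
    first_after (link_time sy c) s (snd dt)).

Fixpoint greedy_walk (m : nat) : nat * R :=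
  match m with
  | O => (0%nat, 0)
  | S m => next_link_event (fst (greedy_walk m)) (snd (greedy_walk m))
  end.

Definition walk_circle (m : nat) : nat := fst (greedy_walk m).
Definition walk_time (m : nat) : R := snd (greedy_walk m).

Lemma next_link_event_spec c s : (c < n sy)%nat ->
  adj sy c (fst (next_link_event c s)) /\
  at_link sy c (fst (next_link_event c s)) (snd (next_link_event c s)) /\
  first_after (link_time sy c) s (snd (next_link_event c s)).
Proof.
  intros Hc. unfold next_link_event. apply epsilon_spec.
  destruct (link_time_first_after sy c s Hvalid (exists_neighbor c Hc)) as [t Ht].
  pose proof Ht as (_ & [d [Hcd Hl]] & _). exists (d, t). auto.
Qed.

Lemma walk_circle_lt m : (walk_circle m < n sy)%nat.
Proof.
  induction m as [|m IH]; [unfold walk_circle; simpl; lia|].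
  exact (proj2 (adj_bounds _ _ _ (proj1 (next_link_event_spec _ (walk_time m) IH)))).
Qed.

Lemma greedy_walk_step m :
  adj sy (walk_circle m) (walk_circle (S m)) /\
  at_link sy (walk_circle m) (walk_circle (S m)) (walk_time (S m)) /\
  first_after (link_time sy (walk_circle m)) (walk_time m) (walk_time (S m)).
Proof. exact (next_link_event_spec (walk_circle m) (walk_time m) (walk_circle_lt m)). Qed.

Lemma walk_time_lt_succ m : walk_time m < walk_time (S m).
Proof. destruct (greedy_walk_step m) as (_ & _ & Hst & _). exact Hst. Qed.

Lemma walk_time_le m m' : (m <= m')%nat -> walk_time m <= walk_time m'.
Proof. induction 1; [lra|]. pose proof (walk_time_lt_succ m0). lra. Qed.

Lemma walk_time_nonneg m : 0 <= walk_time m.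
Proof. apply (walk_time_le 0 m). lia. Qed.

Lemma walk_time_unbounded t : exists m, t < walk_time m.
Proof.
  destruct (link_times_separated sy Hvalid) as [delta [Hdelta Hsep]].
  (* consecutive arrivals on the same circle are at least [delta] apart *)
  assert (Hgrowth : forall m, INR m * delta <= walk_time (S m)).
  { induction m as [|m IH].
    - simpl. pose proof (walk_time_nonneg 1). lra.
    - destruct (greedy_walk_step m) as (Hadj1 & Hl1 & _).
      destruct (greedy_walk_step (S m)) as (Hadj2 & Hl2 & Hlt & _).
      assert (delta <= walk_time (S (S m)) - walk_time (S m)).
      { apply (Hsep (walk_circle (S m)) (walk_circle m) (walk_circle (S (S m))));
          auto using adj_sym.
        apply (Hsync _ _ Hadj1). exact Hl1. }
      rewrite S_INR. lra. }
  destruct (INR_archimed delta t Hdelta) as [m Hm].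
  exists (S m). specialize (Hgrowth m). lra.
Qed.

Lemma walk_interval_exists t : 0 <= t -> exists m, walk_time m <= t < walk_time (S m).
Proof.
  intros Ht. destruct (walk_time_unbounded t) as [M HM].
  induction M as [|M IH]; [unfold walk_time in HM; simpl in HM; lra|].
  destruct (Rle_lt_dec (walk_time M) t); [exists M; auto | auto].
Qed.

Lemma walk_interval_exists_left t : 0 < t -> exists m, walk_time m < t <= walk_time (S m).
Proof.
  intros Ht. destruct (walk_time_unbounded t) as [M HM].
  assert (HM' : t <= walk_time M) by lra. clear HM.
  induction M as [|M IH]; [unfold walk_time in HM'; simpl in HM'; lra|].
  destruct (Rle_lt_dec t (walk_time M)); [auto | exists M; auto].
Qed.

Lemma walk_interval_unique m m' t :
  walk_time m <= t < walk_time (S m) -> walk_time m' <= t < walk_time (S m') -> m = m'.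
Proof.
  intros Hm Hm'. destruct (Nat.lt_trichotomy m m') as [Hlt|[|Hlt]]; auto.
  - pose proof (walk_time_le (S m) m' Hlt). lra.
  - pose proof (walk_time_le (S m') m Hlt). lra.
Qed.

Definition walk_index (t : R) : nat :=
  epsilon (inhabits 0%nat) (fun m => walk_time m <= t < walk_time (S m)).

Definition solo_walk (v : nat) (t : R) : option nat :=
  if Nat.eq_dec v 0 then Some (walk_circle (walk_index t)) else None.

Lemma solo_walk_at m t :
  walk_time m <= t < walk_time (S m) -> solo_walk 0 t = Some (walk_circle m).
Proof.
  intros Hm. unfold solo_walk, walk_index. simpl. do 2 f_equal.
  apply (walk_interval_unique _ _ t); [|exact Hm].
  apply (epsilon_spec (inhabits 0%nat) (fun m => walk_time m <= t < walk_time (S m))).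
  exists m. exact Hm.
Qed.

Lemma solo_walk_other v t : v <> 0%nat -> solo_walk v t = None.
Proof. intros Hv. unfold solo_walk. destruct (Nat.eq_dec v 0); congruence. Qed.

Lemma solo_walk_prev m t :
  walk_time m < t <= walk_time (S m) -> prev solo_walk 0 t (Some (walk_circle m)).
Proof.
  intros Hm. pose proof (walk_time_nonneg m).
  right. split; [lra|]. exists (t - walk_time m). split; [lra|].
  intros s _ Hs1 Hs2. apply solo_walk_at. lra.
Qed.

Lemma solo_walk_prev_other v t : v <> 0%nat -> 0 < t -> prev solo_walk v t None.
Proof.
  intros Hv Ht. right. split; [exact Ht|]. exists t. split; [exact Ht|].
  intros. apply solo_walk_other, Hv.
Qed.

Lemma solo_walk_transition t o : 0 <= t -> prev solo_walk 0 t o ->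
  transition sy (seq 1 (n sy - 1)) (fun _ => 0) solo_walk 0 t o.
Proof.
  intros Ht Hprev. split; [intros [Hin _]; apply in_seq in Hin; lia|]. intros _.
  destruct (Req_dec t 0) as [->|Ht0].
  - (* at time 0 every circle is still occupied, so the robot stays on [C_0] *)
    assert (o = Some 0%nat) as ->.
    { apply (prev_unique _ _ _ _ _ Hprev). left. auto. }
    split.
    + intros j Hj _ Hemp. exfalso. apply (Hemp j (proj2 (adj_bounds _ _ _ Hj))). left. auto.
    + intros _. apply (solo_walk_at 0). pose proof (walk_time_lt_succ 0).
      change (walk_time 0) with 0 in *. lra.
  - destruct (walk_interval_exists_left t ltac:(lra)) as [m Hm].
    assert (o = Some (walk_circle m)) as ->.
    { apply (prev_unique _ _ _ _ _ Hprev), solo_walk_prev, Hm. }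
    destruct (greedy_walk_step m) as (Hadj & Hl & _ & _ & Hnolink).
    destruct (Rlt_le_dec t (walk_time (S m))) as [Hbefore|Hat].
    + split.
      * intros j Hj Hlj. exfalso. apply (Hnolink t); [lra | exists j; auto].
      * intros _. apply solo_walk_at. lra.
    + assert (t = walk_time (S m)) as -> by lra.
      assert (Hnext : solo_walk 0 (walk_time (S m)) = Some (walk_circle (S m))).
      { apply solo_walk_at. pose proof (walk_time_lt_succ (S m)). lra. }
      split.
      * intros j Hj Hlj _. rewrite Hnext. f_equal.
        exact (link_unique _ _ _ _ Hadj Hj Hl Hlj).
      * intros Hblocked. exfalso. apply (Hblocked _ Hadj Hl).
        intros v _ Hv. destruct (Nat.eq_dec v 0) as [->|Hv0].
        -- assert (Some (walk_circle m) = Some (walk_circle (S m))) as [=Heq].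
           { apply (prev_unique solo_walk 0 (walk_time (S m))); [|exact Hv].
             apply solo_walk_prev. lra. }
           destruct Hadj as (_ & _ & Hneq & _). auto.
        -- assert (None = Some (walk_circle (S m))) as [=].
           { apply (prev_unique solo_walk v (walk_time (S m))); [|exact Hv].
             apply solo_walk_prev_other; [exact Hv0 | lra]. }
Qed.

Lemma solo_walk_execution : execution sy (seq 1 (n sy - 1)) (fun _ => 0) solo_walk.
Proof.
  split; [|split].
  - intros u t Hu Ht. destruct (Req_dec t 0) as [->|Ht0]; [exists (Some u); left; auto|].
    destruct (Nat.eq_dec u 0) as [->|Hu0].
    + destruct (walk_interval_exists_left t ltac:(lra)) as [m Hm].
      exists (Some (walk_circle m)). apply solo_walk_prev, Hm.
    + exists None. apply solo_walk_prev_other; [exact Hu0 | lra].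
  - intros u t Hu Ht. destruct (Nat.eq_dec u 0) as [->|Hu0].
    + destruct (walk_interval_exists t Ht) as [m Hm].
      exists (walk_time (S m) - t). split; [lra|].
      intros s Hs1 Hs2. rewrite (solo_walk_at m t), (solo_walk_at m s); auto; lra.
    + exists 1. split; [lra|]. intros. rewrite !solo_walk_other; auto.
  - intros u t o Hu Ht Hprev. destruct (Nat.eq_dec u 0) as [->|Hu0].
    + apply solo_walk_transition; auto.
    + split; [intros; apply solo_walk_other, Hu0|].
      intros Hstay. exfalso. apply Hstay. split; [apply in_seq; lia | lra].
Qed.

Lemma not_tolerates_n_minus_1 : ~ tolerates sy (n sy - 1).
Proof.
  intros [_ Htol].
  apply (Htol (seq 1 (n sy - 1)) (fun _ => 0)) with (e := solo_walk).
  - split; [apply seq_NoDup|]. split; [apply length_seq|]. split; [|intros; lra].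
    intros u Hu. apply in_seq in Hu. lia.
  - exact solo_walk_execution.
  - (* robot 0 is alone, so after time 0 it finds every link target empty *)
    exists 1. split; [lra|]. intros u [Hu HuL] t i j Ht Hprev Hij _ v _ Hv.
    assert (Hall0 : forall w, (w < n sy)%nat -> ~ In w (seq 1 (n sy - 1)) -> w = 0%nat).
    { intros w Hw HwL. destruct (Nat.eq_dec w 0); [assumption|].
      exfalso. apply HwL, in_seq. lia. }
    rewrite (Hall0 u Hu HuL) in Hprev.
    destruct (Nat.eq_dec v 0) as [->|Hv0].
    + assert (Some i = Some j) as [=<-] by exact (prev_unique _ _ _ _ _ Hprev Hv).
      destruct Hij as (_ & _ & Hii & _). auto.
    + assert (None = Some j) as [=].
      { apply (prev_unique solo_walk v t); [|exact Hv].
        apply solo_walk_prev_other; [exact Hv0 | lra]. }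
Qed.

End Chain.

Lemma not_tolerates_n sy : ~ tolerates sy (n sy).
Proof.
  intros [_ Htol].
  apply (Htol (seq 0 (n sy)) (fun _ => 0)) with (e := fun _ _ => None).
  - split; [apply seq_NoDup|]. split; [apply length_seq|]. split; [|intros; lra].
    intros u Hu. apply in_seq in Hu. lia.
  - split; [|split].
    + intros u t Hu Ht. destruct (Req_dec t 0) as [->|Ht0]; [exists (Some u); left; auto|].
      exists None. right. split; [lra|]. exists t. split; [lra | auto].
    + intros u t Hu Ht. exists 1. split; [lra | auto].
    + intros u t o Hu Ht Hprev. split; [auto|]. intros Hstay. exfalso.
      apply Hstay. split; [apply in_seq; lia | lra].
  - exists 0. split; [lra|]. intros u [Hu HuL]. exfalso. apply HuL, in_seq. lia.
Qed.

Theorem lemma21 (sy : system) :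
  valid_system sy -> sync_schedule sy -> is_path_graph sy -> (2 <= n sy)%nat ->
  isolation_resilience sy (n sy - 2).
Proof.
  intros Hvalid Hsync (p & label_lt & label_inj & adj_iff_label) Hn.
  split; [exact (tolerates_n_minus_2 sy p Hvalid Hsync label_lt label_inj adj_iff_label Hn)|].
  intros k Htol. pose proof (proj1 Htol) as Hk.
  destruct (Nat.eq_dec k (n sy)) as [->|Hk_n]; [exfalso; exact (not_tolerates_n sy Htol)|].
  destruct (Nat.eq_dec k (n sy - 1)) as [->|Hk_n1]; [exfalso | lia].
  exact (not_tolerates_n_minus_1 sy p Hvalid Hsync label_lt label_inj adj_iff_label Hn Htol).
Qed.
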